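(* Let $\Sigma$ be an alphabet with $\sigma\ge2$ letters, let $k\ge4$ and $n=\sigma^{k-2}$. Let $S=s_1\cdots s_n$ be a cyclic de Bruijn sequence of order $k-2$ over $\Sigma$. Let $X$ be the string $S$ followed by its first $k$ characters $s_1\cdots s_k$. Indices are taken modulo $n$. For $i=1,\dots,n$: - let $y_i=s_i s_{i+1}\cdots s_{i+k-1}$ be the cyclic $k$-mer of $S$ starting at position $i$; - choose a letter $b_i\neq s_{i+k}$ and set $z_i=s_{i+1}\cdots s_{i+k-1}b_i$. Let $I=\{X\}\cup\{y_ib_i : 1\le i\le n\}$. Then: 1. The order-$k$ node-centric de Bruijn graph $G=(V,E)$ of $I$ has exactly the $2n$ nodes $y_1,\dots,y_n,z_1,\dots,z_n$ (all distinct), and its edges are exactly $(y_i,y_{i+1})$ and $(y_i,z_i)$ for $i=1,\dots,n$; that is, $G$ is a directed $n$-cycle with one out-degree-$0$ pendant node attached to each cycle node. 2. $F=E$ is a necklace cover of $G$ consisting of a single closed necklace with $N_O=0$ and $N_L=n$, whose necklace string has $2n$ letters and $2n$ parentheses, i.e. $4n$ symbols. 3. Every spectrum-preserving string set of $I$ without repetitions has weight at least $(k+1)n$, and weight $(k+1)n$ is attained. In particular, the necklace representation uses a fraction $4/(k+1)$ of the symbols of a minimum no-repetition SPSS.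
   Context: A cyclic de Bruijn sequence of order $m$ over $\Sigma$ is a string $S$ of length $\sigma^m$ such that every string of length $m$ over $\Sigma$ occurs exactly once as a cyclic substring of $S$ (i.e. as a substring of the infinite periodic extension starting at one of the positions $1,\dots,|S|$). $\mathrm{spec}_k(I)$ denotes the set of length-$k$ substrings of strings in $I$. The order-$k$ node-centric de Bruijn graph of $I$ is $G=(V,E)$ with $V=\mathrm{spec}_k(I)$ and $(u,v)\in E$ iff the last $k-1$ characters of $u$ equal the first $k-1$ characters of $v$; the label of $(u,v)$ is the last character of $v$. A necklace cover is an edge set $F\subseteq E$ with every node of in-degree at most $1$ in $(V,F)$. Its necklaces are the weakly connected components of $(V,F)$. A necklace is closed if it has no node of in-degree $0$ in $(V,F)$, open otherwise. $N_O$ is the number of open necklaces, and $N_L=(\#\text{nodes of out-degree }0\text{ in }(V,F))-N_O$. The necklace string of a closed necklace with cycle $v_1\to\cdots\to v_c$ is formed as follows: - take one character per cycle node, namely the label of its entering edge; - immediately after the character of each cycle node $v$, insert $\mathtt{(}\mathrm{enc}(w)\mathtt{)}$ for each child $w$ of $v$ not on the cycle; - here $\mathrm{enc}(w)$ is the label of the edge entering $w$ when $w$ has no children. A spectrum-preserving string set (SPSS) of $I$ without repetitions is a finite set $S'$ of strings, each of length at least $k$, such that $\mathrm{spec}_k(S')=\mathrm{spec}_k(I)$ and each $k$-mer of $\mathrm{spec}_k(I)$ occurs exactly once in total among all occurrences in the strings of $S'$. Its weight is $\sum_{z\in S'}|z|$. *)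

From mathcomp Require Import all_boot.
Set Implicit Arguments.
Unset Strict Implicit.
Unset Printing Implicit Defensive.

Section Strings.
Variable Sigma : finType.

(* Positions are 0-based; index j is read modulo the length of S. *)
Definition cnth (S : seq Sigma) (j : nat) : option Sigma :=
  if S is x :: _ then Some (nth x S (j %% size S)) else None.

Definition cyc_sub (S : seq Sigma) (i m : nat) : seq Sigma :=
  if S is x :: _ then mkseq (fun j => nth x S ((i + j) %% size S)) m else [::].

Definition cyclic_deBruijn (S : seq Sigma) (m : nat) : Prop :=
  size S = #|Sigma| ^ m /\
  forall w : seq Sigma, size w = m ->
    count (fun i => cyc_sub S i m == w) (iota 0 (size S)) = 1.

Definition kmers (k : nat) (s : seq Sigma) : seq (seq Sigma) :=
  [seq take k (drop i s) | i <- iota 0 ((size s).+1 - k)].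

Definition spec (k : nat) (I : seq (seq Sigma)) : {set k.-tuple Sigma} :=
  [set w : k.-tuple Sigma | has (fun s => val w \in kmers k s) I].

Definition dbgV (k : nat) (I : seq (seq Sigma)) := spec k I.
Definition dbgE (k : nat) (I : seq (seq Sigma)) : rel (k.-tuple Sigma) :=
  fun u v => [&& u \in dbgV k I, v \in dbgV k I &
                 drop 1 (val u) == take (k - 1) (val v)].

Definition spss_norep (k : nat) (I S' : seq (seq Sigma)) : Prop :=
  [/\ uniq S', all (fun z => k <= size z) S', spec k S' = spec k I &
      forall w : k.-tuple Sigma, w \in spec k I ->
        sumn [seq count (pred1 (val w)) (kmers k z) | z <- S'] = 1].

Definition weight (S' : seq (seq Sigma)) : nat := sumn [seq size z | z <- S'].

End Strings.

Section Necklaces.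
Variable T : finType.
Variables (V : {set T}) (F : rel T).

Definition indeg (v : T) : nat := #|[set u in V | F u v]|.
Definition outdeg (v : T) : nat := #|[set w in V | F v w]|.

Definition necklace_cover (E : rel T) : Prop :=
  (forall u v, F u v -> E u v) /\ (forall v, v \in V -> indeg v <= 1).

Definition weak_adj : rel T :=
  fun u v => [&& u \in V, v \in V & F u v || F v u].

Definition necklaces : {set {set T}} :=
  [set [set w in V | connect weak_adj v w] | v in V].

Definition open_necklace (C : {set T}) : bool := [exists v in C, indeg v == 0].

Definition N_O : nat := #|[set C in necklaces | open_necklace C]|.
Definition N_L : nat := #|[set v in V | outdeg v == 0]| - N_O.

Definition is_cycle (cyc : seq T) : bool :=
  [&& cyc != [::], uniq cyc, all (fun v => v \in V) cyc & cycle F cyc].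

End Necklaces.

Inductive nsym (Sigma : Type) := Letter of Sigma | LPar | RPar.
Arguments LPar {Sigma}.
Arguments RPar {Sigma}.

Definition is_letter (Sigma : Type) (x : nsym Sigma) : bool :=
  if x is Letter _ then true else false.
Definition is_paren (Sigma : Type) (x : nsym Sigma) : bool := ~~ is_letter x.

(* label of the edge entering node v: the last character of v
   (a one-letter list for a nonempty node) *)
Definition lab (Sigma : finType) (k : nat) (v : k.-tuple Sigma) : seq (nsym Sigma) :=
  [seq Letter c | c <- drop (size (val v)).-1 (val v)].

(* necklace string of a closed necklace with cycle cyc:
   for each cycle node v, the label of its entering edge, followed by
   (enc w) for each child w of v not on the cycle, where enc w is the label
   of the edge entering w (the definition for childless w). *)
Definition necklace_string (Sigma : finType) (k : nat)
    (V : {set k.-tuple Sigma}) (F : rel (k.-tuple Sigma))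
    (cyc : seq (k.-tuple Sigma)) : seq (nsym Sigma) :=
  flatten [seq lab v ++
     flatten [seq LPar :: lab w ++ [:: RPar]
             | w <- enum [set w in V | F v w & w \notin cyc]]
   | v <- cyc].

Arguments spec {Sigma} k I.
Arguments dbgV {Sigma} k I.
Arguments dbgE {Sigma} k I.
Arguments spss_norep {Sigma} k I S'.
Arguments kmers {Sigma} k s.
Arguments cyc_sub {Sigma} S i m.
Arguments cnth {Sigma} S j.
Arguments cyclic_deBruijn {Sigma} S m.

From mathcomp Require Import all_boot zify.
Set Implicit Arguments.
Unset Strict Implicit.
Unset Printing Implicit Defensive.

(* Since S is a de Bruijn sequence of order k-2, a window of length k-2 of S
   determines its starting position modulo n.  Hence the k-mers of I are
   exactly the n cyclic windows y_i and the n words z_i, and the only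
   overlaps are y_i -> y_(i+1) and y_i -> z_i: a successor of z_i would
   have to read s_(i+2) ... s_(i+k-1) b_i, and being a window of S up to
   its last letter it would force b_i = s_(i+k).  So the graph is an
   n-cycle with one leaf hanging from each cycle node, and its necklace
   string has two letters and two parentheses per cycle node.
   In a spectrum-preserving string set without repetitions a k-mer without
   successor can only be the last k-mer of a string, so there are at least
   n strings; since the 2n k-mers occur exactly once, the weight is
   2n + (k-1) * #strings >= (k+1) n, and the n strings y_i b_i attain it. *)

(** * k-mers and spectrum-preserving string sets *)

Lemma drop1_take (T : Type) l (s : seq T) :
  drop 1 (take l s) = take (l - 1) (drop 1 s).
Proof. by case: l s => [|l] [|x s] //=; rewrite !drop0 ?sub0n ?take0 ?subn1. Qed.

Section Kmers.
Variables (Sigma : finType) (k : nat).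
Implicit Types (x z : seq Sigma) (I R : seq (seq Sigma)).

Lemma size_kmers z : size (kmers k z) = (size z).+1 - k.
Proof. by rewrite size_map size_iota. Qed.

Lemma kmersP z x :
  reflect (exists2 p, p + k <= size z & x = take k (drop p z)) (x \in kmers k z).
Proof.
apply: (iffP mapP) => [[p] | [p le_pk_z ->]].
  by rewrite mem_iota add0n => /andP[_ lt_p] ->; exists p => //; lia.
by exists p; rewrite // mem_iota add0n; apply/andP; split => //; lia.
Qed.

Lemma size_mem_kmers z x : x \in kmers k z -> size x = k.
Proof. by case/kmersP=> p le_pk_z ->; rewrite size_takel // size_drop; lia. Qed.

Definition all_kmers R := flatten [seq kmers k z | z <- R].

Lemma count_all_kmers (a : pred (seq Sigma)) R :
  count a (all_kmers R) = sumn [seq count a (kmers k z) | z <- R].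
Proof. by rewrite count_flatten -map_comp. Qed.

Lemma all_kmersP R x :
  reflect (exists2 w : k.-tuple Sigma, w \in spec k R & x = val w)
          (x \in all_kmers R).
Proof.
apply: (iffP flatten_mapP) => [[z zR xz] | [w + ->]].
  have /eqP size_x := size_mem_kmers xz.
  by exists (Tuple size_x) => //; rewrite inE; apply/hasP; exists z.
by rewrite inE => /hasP[z zR wz]; exists z.
Qed.

Lemma weight_all_kmers R : 0 < k -> all (fun z => k <= size z) R ->
  weight R = size (all_kmers R) + (k - 1) * size R.
Proof.
move=> k_gt0; elim: R => [|z R IH] /=; first by rewrite muln0.
move=> /andP[le_k_z /IH]; rewrite /weight /all_kmers /= => ->.
by rewrite size_cat size_kmers; lia.
Qed.

Lemma spss_norep_perm I R : spss_norep k I R ->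
  perm_eq (all_kmers R) [seq val w | w <- enum (spec k I)].
Proof.
case=> _ _ spec_R once.
have count1 (w : k.-tuple Sigma) : w \in spec k I -> count_mem (val w) (all_kmers R) = 1.
  by move=> /once <-; rewrite count_all_kmers.
have mem_I x : (x \in all_kmers R) = (x \in [seq val w | w <- enum (spec k I)]).
  apply/all_kmersP/mapP => [[w] | [w]]; rewrite ?mem_enum => wI ->.
    by exists w; rewrite ?mem_enum -?spec_R.
  by exists w; rewrite ?spec_R.
apply: uniq_perm => [||x]; rewrite ?mem_I //.
  apply: count_mem_uniq => x; rewrite mem_I.
  have [/mapP[w + ->] | x_notin] := boolP (x \in _); first by rewrite mem_enum => /count1.
  by apply/count_memPn; rewrite mem_I.
by rewrite map_inj_uniq ?enum_uniq //; apply: val_inj.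
Qed.

Lemma spss_norep_of_uniq I R :
  uniq R -> all (fun z => k <= size z) R -> spec k R = spec k I ->
  uniq (all_kmers R) -> spss_norep k I R.
Proof.
move=> uniq_R size_R spec_R uniq_kmers; split=> // w.
rewrite -spec_R => wR; rewrite -count_all_kmers count_uniq_mem //.
by apply/eqP; rewrite eqb1; apply/all_kmersP; exists w.
Qed.

Lemma count_kmers_dead_end (dead : pred (seq Sigma)) z :
  (forall x w, dead x -> w \in kmers k z -> drop 1 x != take (k - 1) w) ->
  count dead (kmers k z) <= 1.
Proof.
move=> no_succ; set N := (size z).+1 - k.
have last_pos p : p < N -> dead (take k (drop p z)) -> p = N.-1.
  move=> lt_pN dead_p; case: (ltnP p.+1 N) => [lt_SpN | ]; last lia.
  have next_kmer : take k (drop p.+1 z) \in kmers k z.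
    by apply/kmersP; exists p.+1 => //; rewrite /N in lt_SpN; lia.
  have := no_succ _ _ dead_p next_kmer.
  by rewrite take_takel ?leq_subr // drop1_take drop_drop add1n eqxx.
rewrite count_map (@leq_trans (count_mem N.-1 (iota 0 N))) //.
  rewrite -!size_filter; apply: uniq_leq_size; first exact/filter_uniq/iota_uniq.
  move=> p; rewrite !mem_filter !mem_iota -/N add0n => /andP[dead_p /andP[_ lt_pN]].
  by rewrite /= (last_pos p) // eqxx /=; lia.
by rewrite count_uniq_mem ?iota_uniq ?leq_b1.
Qed.

End Kmers.

Lemma count_flatten_uniform (T : eqType) (U : Type) (a : pred U)
    (f : T -> seq U) r s :
  {in s, forall x, count a (f x) = r} ->
  count a (flatten [seq f x | x <- s]) = r * size s.
Proof.
elim: s => [|x s IH] f_r /=; first by rewrite muln0.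
rewrite count_cat f_r ?mem_head // IH ?mulnS // => y y_s.
by apply: f_r; rewrite inE y_s orbT.
Qed.

Lemma count_letter_lab (Sigma : finType) k (w : k.-tuple Sigma) :
  0 < k -> count (@is_letter Sigma) (lab w) = 1.
Proof.
move=> k_gt0; rewrite /lab count_map (eq_count (a2 := predT)) // count_predT.
by rewrite size_drop size_tuple; lia.
Qed.

Lemma count_paren_lab (Sigma : finType) k (w : k.-tuple Sigma) :
  count (@is_paren Sigma) (lab w) = 0.
Proof. by rewrite /lab count_map (eq_count (a2 := pred0)) // count_pred0. Qed.

(** * Windows of a cyclic de Bruijn sequence *)

Section DeBruijnConstruction.
Variables (Sigma : finType) (k : nat) (S : seq Sigma) (b : nat -> Sigma).
Hypothesis k_ge2 : 2 <= k.
Hypothesis S_deBruijn : cyclic_deBruijn S (k - 2).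
Hypothesis b_neq : forall i, i < size S -> Some (b i) != cnth S (i + k).

Local Notation n := (size S).

Lemma n_gt0 : 0 < n.
Proof.
have [-> _] := S_deBruijn; rewrite expn_gt0.
by apply/orP; left; apply/card_gt0P; exists (b 0).
Qed.

Lemma eq_mod_lt i j : i < n -> j < n -> i = j %[mod n] -> i = j.
Proof. by move=> lt_in lt_jn; rewrite !modn_small. Qed.

(* [b 0] is only a default value for [nth], as [S] is nonempty. *)
Definition letter j := nth (b 0) S (j %% n).

Definition window c l := mkseq (fun t => letter (c + t)) l.

Lemma letterD_mod i j t : i = j %[mod n] -> letter (i + t) = letter (j + t).
Proof. by move=> eq_ij; rewrite /letter -modnDml eq_ij modnDml. Qed.

Lemma window_mod i j l : i = j %[mod n] -> window i l = window j l.
Proof. by move=> eq_ij; apply: eq_mkseq => t; apply: letterD_mod. Qed.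

Lemma cyc_sub_window i l : cyc_sub S i l = window i l.
Proof.
rewrite /cyc_sub /window /letter; case: S n_gt0 => [//|x S'] n_gt0.
by apply: eq_mkseq => t; apply: set_nth_default; rewrite ltn_mod.
Qed.

Lemma cnth_letter j : cnth S j = Some (letter j).
Proof.
rewrite /cnth /letter; case: S n_gt0 => [//|x S'] n_gt0.
by congr Some; apply: set_nth_default; rewrite ltn_mod.
Qed.

Lemma b_neq_letter j : j < n -> b j != letter (j + k).
Proof. by move=> /b_neq; rewrite cnth_letter; apply: contra => /eqP ->. Qed.

Lemma take_window c l l' : l' <= l -> take l' (window c l) = window c l'.
Proof.
by move=> le_l'l; rewrite /window /mkseq -map_take take_iota (minn_idPl _).
Qed.

Lemma window_rcons c l : window c l.+1 = rcons (window c l) (letter (c + l)).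
Proof. exact: mkseqS. Qed.

Lemma window_cons c l : window c l.+1 = letter c :: window c.+1 l.
Proof.
rewrite /window /mkseq /= addn0 -[1]/(1 + 0) iotaDl -map_comp.
by congr (_ :: _); apply: eq_map => t /=; rewrite addnA addn1.
Qed.

Lemma window_inj_mod i j l :
  k - 2 <= l -> window i l = window j l -> i = j %[mod n].
Proof.
move=> le_l /(congr1 (take (k - 2))); rewrite !take_window // => eq_w.
have [_ /(_ (window i (k - 2)))] := S_deBruijn.
rewrite size_mkseq -size_filter => /(_ erefl).
set P := filter _ _ => size_P.
have mem_P p : p = i %[mod n] \/ p = j %[mod n] -> p %% n \in P.
  rewrite mem_filter mem_iota add0n ltn_mod n_gt0 /= andbT cyc_sub_window.
  by rewrite (window_mod _ (modn_mod _ _)); case=> /window_mod ->; rewrite ?eq_w.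
move: (mem_P i (or_introl erefl)) (mem_P j (or_intror erefl)) size_P.
by clearbody P; case: P {mem_P} => [|a [|]] //; rewrite !inE => /eqP -> /eqP ->.
Qed.

Definition Y i := cyc_sub S i k.
Definition Z i := cyc_sub S i.+1 (k - 1) ++ [:: b i].

Let k_pred : k = (k - 1).+1. Proof. lia. Qed.
Let k1_pred : k - 1 = (k - 2).+1. Proof. lia. Qed.
Let k2_le_k1 : k - 2 <= k - 1. Proof. lia. Qed.

Lemma size_Y i : size (Y i) = k.
Proof. by rewrite /Y cyc_sub_window size_mkseq. Qed.

Lemma Y_mod i j : i = j %[mod n] -> Y i = Y j.
Proof. by rewrite /Y !cyc_sub_window; apply: window_mod. Qed.

Lemma Y_rcons i : Y i = rcons (window i (k - 1)) (letter (i + (k - 1))).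
Proof. by rewrite /Y cyc_sub_window {1}k_pred window_rcons. Qed.

Lemma Z_rcons i : Z i = rcons (window i.+1 (k - 1)) (b i).
Proof. by rewrite /Z cyc_sub_window cats1. Qed.

Lemma size_Z i : size (Z i) = k.
Proof. by rewrite Z_rcons size_rcons size_mkseq -k_pred. Qed.

Lemma take_Y i : take (k - 1) (Y i) = window i (k - 1).
Proof. by rewrite /Y cyc_sub_window take_window ?leq_subr. Qed.

Lemma drop1_Y i : drop 1 (Y i) = window i.+1 (k - 1).
Proof. by rewrite /Y cyc_sub_window {1}k_pred (window_cons i) /= drop0. Qed.

Lemma take_Z i : take (k - 1) (Z i) = window i.+1 (k - 1).
Proof. by rewrite /Z cyc_sub_window take_size_cat ?size_mkseq. Qed.

Lemma drop1_Z i : drop 1 (Z i) = rcons (window i.+2 (k - 2)) (b i).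
Proof.
rewrite Z_rcons drop_rcons; last by rewrite size_mkseq k1_pred.
by rewrite {1}k1_pred (window_cons i.+1) /= drop0.
Qed.

Lemma window_pred c :
  window c (k - 1) = rcons (window c (k - 2)) (letter (c + (k - 2))).
Proof. by rewrite {1}k1_pred window_rcons. Qed.

Lemma Y_inj_mod i j : Y i = Y j -> i = j %[mod n].
Proof. by rewrite /Y !cyc_sub_window; apply: window_inj_mod; rewrite leq_subr. Qed.

Lemma Z_inj_mod i j : Z i = Z j -> i = j %[mod n].
Proof.
rewrite !Z_rcons => /rcons_inj[/(window_inj_mod k2_le_k1) eq_ij _].
by apply/eqP; rewrite -(eqn_modDr 1) !addn1 eq_ij.
Qed.

Lemma Y_neq_Z i j : j < n -> Y i <> Z j.
Proof.
rewrite Y_rcons Z_rcons => lt_jn /rcons_inj[/(window_inj_mod k2_le_k1) eq_ij eq_b].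
have /negP[] := b_neq_letter lt_jn.
by rewrite -eq_b (letterD_mod _ eq_ij) addSnnS -k_pred.
Qed.

Definition node x := exists2 i, i < n & x = Y i \/ x = Z i.

Lemma node_Y i : node (Y i).
Proof.
by exists (i %% n); [rewrite ltn_mod n_gt0 | left; apply: Y_mod; rewrite modn_mod].
Qed.

Lemma node_window_prefix x : node x -> exists c, take (k - 1) x = window c (k - 1).
Proof. by case=> i _ [] ->; [exists i; apply: take_Y | exists i.+1; apply: take_Z]. Qed.

Lemma Z_dead_end j x : j < n -> node x -> drop 1 (Z j) != take (k - 1) x.
Proof.
move=> lt_jn /node_window_prefix[c ->]; rewrite drop1_Z window_pred.
apply/eqP => /rcons_inj[/(window_inj_mod (leqnn _)) eq_jc eq_b].
have /negP[] := b_neq_letter lt_jn.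
by rewrite eq_b -(letterD_mod _ eq_jc) !addSnnS -k1_pred -k_pred.
Qed.

Lemma Y_succ_Y i j : drop 1 (Y i) = take (k - 1) (Y j) -> j = i.+1 %[mod n].
Proof. by rewrite drop1_Y take_Y => /(window_inj_mod k2_le_k1) ->. Qed.

Lemma Y_succ_Z i j : drop 1 (Y i) = take (k - 1) (Z j) -> j = i %[mod n].
Proof.
rewrite drop1_Y take_Z => /(window_inj_mod k2_le_k1) eq_ij.
by apply/eqP; rewrite -(eqn_modDr 1) !addn1 eq_ij.
Qed.

Definition X := S ++ take k S.
Definition witness := [seq Y i ++ [:: b i] | i <- iota 0 n].
Definition inputs := X :: witness.

Lemma kmers_Y_rcons i : kmers k (Y i ++ [:: b i]) = [:: Y i; Z i].
Proof.
have size_Yb : size (Y i ++ [:: b i]) = k.+1 by rewrite size_cat size_Y addn1.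
rewrite /kmers size_Yb (_ : k.+2 - k = 2) /=; last lia.
rewrite drop0 take_size_cat ?size_Y //.
rewrite cats1 drop_rcons; last by rewrite size_Y; lia.
by rewrite drop1_Y -Z_rcons take_oversize ?size_Z.
Qed.

Lemma nth_X q : q < size X -> nth (b 0) X q = letter q.
Proof.
rewrite /X size_cat size_take_min nth_cat /letter => lt_q.
case: ltnP => [lt_qn | le_nq]; first by rewrite modn_small.
rewrite nth_take; last lia.
by rewrite -{2}(subnK le_nq) modnDr modn_small //; lia.
Qed.

Lemma kmers_X x : x \in kmers k X -> exists p, x = Y p.
Proof.
case/kmersP=> p le_pk ->; exists p.
apply: (@eq_from_nth _ (b 0)) => [|t]; rewrite size_takel ?size_drop ?size_Y //; try lia.
move=> lt_tk; rewrite nth_take // nth_drop nth_X; last lia.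
by rewrite /Y cyc_sub_window nth_mkseq.
Qed.

Lemma mem_spec_witness (w : k.-tuple Sigma) : w \in spec k witness <-> node (val w).
Proof.
rewrite inE has_map; split=> [/hasP[i] | [i lt_in val_w]].
  rewrite mem_iota /= kmers_Y_rcons !inE => lt_in /orP[] /eqP val_w;
  exists i => //; by [left | right].
apply/hasP; exists i; first by rewrite mem_iota.
by rewrite /= kmers_Y_rcons !inE; case: val_w => ->; rewrite eqxx ?orbT.
Qed.

Lemma mem_spec_inputs (w : k.-tuple Sigma) : w \in spec k inputs <-> node (val w).
Proof.
have spec_w : has (fun z => val w \in kmers k z) witness = (w \in spec k witness).
  by rewrite inE.
rewrite inE /= spec_w; split=> [/orP[/kmers_X[p ->] | /mem_spec_witness] | node_w] //.
  exact: node_Y.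
by apply/orP; right; apply/mem_spec_witness.
Qed.

(** * The de Bruijn graph of I *)

Local Notation V := (dbgV k inputs).
Local Notation E := (dbgE k inputs).

Definition ynode i : k.-tuple Sigma := Tuple (introT eqP (size_Y i)).
Definition znode i : k.-tuple Sigma := Tuple (introT eqP (size_Z i)).

Lemma ynode_mod i j : i = j %[mod n] -> ynode i = ynode j.
Proof. by move=> /Y_mod eq_Y; apply: val_inj. Qed.

Lemma ynode_inj_mod i j : ynode i = ynode j -> i = j %[mod n].
Proof. by move=> /(congr1 val) /Y_inj_mod. Qed.

Lemma znode_inj i j : i < n -> j < n -> znode i = znode j -> i = j.
Proof. by move=> lt_in lt_jn /(congr1 val) /Z_inj_mod /eq_mod_lt; apply. Qed.

Lemma ynode_neq_znode i j : j < n -> ynode i != znode j.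
Proof. by move=> lt_jn; apply/eqP => /(congr1 val) /(Y_neq_Z lt_jn). Qed.

Lemma ynode_in i : ynode i \in V.
Proof. exact/mem_spec_inputs/node_Y. Qed.

Lemma znode_in i : i < n -> znode i \in V.
Proof. by move=> lt_in; apply/mem_spec_inputs; exists i => //; right. Qed.

Lemma dbgVP w : w \in V -> exists2 i, i < n & w = ynode i \/ w = znode i.
Proof.
case/mem_spec_inputs=> i lt_in [] val_w; exists i => //.
  by left; apply: val_inj.
by right; apply: val_inj.
Qed.

Lemma dbgE_ynodeS i : E (ynode i) (ynode i.+1).
Proof. by rewrite /dbgE !ynode_in /= drop1_Y take_Y. Qed.

Lemma dbgE_ynode_znode i : i < n -> E (ynode i) (znode i).
Proof. by move=> lt_in; rewrite /dbgE ynode_in znode_in //= drop1_Y take_Z. Qed.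

Lemma znode_sink i w : i < n -> ~~ E (znode i) w.
Proof.
move=> lt_in; apply/and3P => -[_ /mem_spec_inputs node_w].
exact/negP/Z_dead_end.
Qed.

Lemma dbgE_ynodeP i w : i < n -> E (ynode i) w -> w = ynode i.+1 \/ w = znode i.
Proof.
move=> lt_in /and3P[_ /dbgVP[j lt_jn [] -> /eqP]].
  by move=> /Y_succ_Y /ynode_mod ->; left.
by move=> /Y_succ_Z /(eq_mod_lt lt_jn lt_in) ->; right.
Qed.

Lemma dbgE_iff u v : E u v <-> exists2 i, i < n &
  (val u = Y i /\ val v = Y i.+1 \/ val u = Y i /\ val v = Z i).
Proof.
split=> [E_uv | [i lt_in [][u_i v_i]]].
- have /dbgVP[i lt_in [u_i | u_i]] : u \in V by case/and3P: E_uv.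
  + move: E_uv; rewrite u_i => /(dbgE_ynodeP lt_in) v_i.
    exists i; first exact: lt_in.
    by case: v_i => ->; [left | right].
  + by rewrite u_i (negbTE (znode_sink v lt_in)) in E_uv.
- have -> : u = ynode i by apply: val_inj; exact: u_i.
  have -> : v = ynode i.+1 by apply: val_inj; exact: v_i.
  exact: dbgE_ynodeS.
- have -> : u = ynode i by apply: val_inj; exact: u_i.
  have -> : v = znode i by apply: val_inj; exact: v_i.
  exact: dbgE_ynode_znode.
Qed.

(** * Necklaces *)

Lemma dbgE_pred_unique u1 u2 v : E u1 v -> E u2 v -> u1 = u2.
Proof.
move=> /dbgE_iff[i1 lt1 E1] /dbgE_iff[i2 lt2 E2]; apply: val_inj.
case: E1 => [][-> v1]; case: E2 => [][-> v2].
- apply: Y_mod; apply/eqP; rewrite -(eqn_modDr 1) !addn1; apply/eqP.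
  by apply: Y_inj_mod; rewrite -v1 -v2.
- by move: v2; rewrite v1 => /(Y_neq_Z lt2).
- by move: v1; rewrite v2 => /(Y_neq_Z lt1).
- by apply: Y_mod; apply: Z_inj_mod; rewrite -v1 -v2.
Qed.

Lemma dbgE_pred_exists v : v \in V -> exists u, E u v.
Proof.
case/dbgVP=> i lt_in [] ->; last by exists (ynode i); apply: dbgE_ynode_znode.
exists (ynode (i + n.-1)); rewrite {1}(@ynode_mod i (i + n.-1).+1) ?dbgE_ynodeS //.
by rewrite -addnS prednK ?n_gt0 // modnDr.
Qed.

Lemma indeg_dbg v : v \in V -> indeg V E v = 1.
Proof.
move=> v_in; apply/eqP; rewrite eqn_leq; apply/andP; split.
  apply/card_le1_eqP => u1 u2; rewrite !inE => /andP[_ E1] /andP[_ E2].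
  exact: dbgE_pred_unique E2 E1.
rewrite card_gt0; apply/set0Pn; have [u E_uv] := dbgE_pred_exists v_in.
by exists u; rewrite inE E_uv andbT; case/and3P: E_uv.
Qed.

Lemma dbg_necklace_cover : necklace_cover V E E.
Proof. by split=> // v /indeg_dbg ->. Qed.

Lemma connect_weak_adj v w : v \in V -> w \in V -> connect (weak_adj V E) v w.
Proof.
have from_ynode0 x : x \in V -> connect (weak_adj V E) (ynode 0) x.
  have to_ynode i : connect (weak_adj V E) (ynode 0) (ynode i).
    elim: i => [|i IH]; first exact: connect0.
    by apply: connect_trans IH (connect1 _); rewrite /weak_adj !ynode_in dbgE_ynodeS.
  case/dbgVP=> i lt_in [] -> //; apply: connect_trans (to_ynode i) (connect1 _).
  by rewrite /weak_adj ynode_in znode_in // dbgE_ynode_znode.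
have weak_adj_sym : symmetric (weak_adj V E).
  by move=> x y; rewrite /weak_adj andbCA orbC.
move=> /from_ynode0 v_conn /from_ynode0; apply: connect_trans.
by rewrite (sym_connect_sym weak_adj_sym).
Qed.

Lemma necklaces_dbg : necklaces V E = [set V].
Proof.
have comp_V v : v \in V -> [set w in V | connect (weak_adj V E) v w] = V.
  by move=> v_in; apply/setP => w; rewrite inE andb_idr //; apply: connect_weak_adj.
apply/setP => C; rewrite inE; apply/imsetP/eqP => [[v v_in ->] | ->].
  exact: comp_V.
by exists (ynode 0); [apply: ynode_in | rewrite comp_V ?ynode_in].
Qed.

Lemma N_O_dbg : N_O V E = 0.
Proof.
apply/eqP; rewrite cards_eq0; apply/eqP/setP => C; rewrite !inE necklaces_dbg inE.
apply/negbTE/andP => -[/eqP -> /existsP[v /andP[v_in]]].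
by rewrite indeg_dbg.
Qed.

Lemma sinks_dbg : [set v in V | outdeg V E v == 0] = [set znode i | i : 'I_n].
Proof.
apply/setP => v; rewrite inE; apply/andP/imsetP => [[v_in] | [i _ ->]].
  case/dbgVP: v_in => i lt_in [] ->; last by exists (Ordinal lt_in).
  rewrite cards_eq0 => /eqP/setP/(_ (znode i)).
  by rewrite in_set0 in_set znode_in // dbgE_ynode_znode.
split; first exact: znode_in.
rewrite cards_eq0; apply/eqP/setP => w.
by rewrite !inE (negbTE (znode_sink w (ltn_ord i))) andbF.
Qed.

Lemma N_L_dbg : N_L V E = n.
Proof.
rewrite /N_L N_O_dbg subn0 sinks_dbg card_imset ?card_ord // => i j.
by move/(znode_inj (ltn_ord i) (ltn_ord j)); apply: val_inj.
Qed.

Definition ycycle := [seq ynode i | i <- iota 0 n].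

Lemma path_ynode a l : path E (ynode a) [seq ynode i | i <- iota a.+1 l].
Proof. by elim: l a => [//|l IH] a /=; rewrite dbgE_ynodeS IH. Qed.

Lemma ycycle_is_cycle : is_cycle V E ycycle.
Proof.
apply/and4P; split.
- by rewrite -size_eq0 size_map size_iota -lt0n n_gt0.
- rewrite map_inj_in_uniq ?iota_uniq // => i j.
  rewrite !mem_iota !add0n => /andP[_ lt_in] /andP[_ lt_jn].
  by move/ynode_inj_mod; apply: eq_mod_lt.
- by apply/allP => _ /mapP[i _ ->]; apply: ynode_in.
rewrite /ycycle -(prednK n_gt0) /= {2}(@ynode_mod 0 n); last by rewrite modnn mod0n.
have iota_n : iota 1 n = rcons (iota 1 n.-1) n.
  by rewrite -{1}(prednK n_gt0) -(addn1 n.-1) iotaD add1n prednK ?n_gt0 // cats1.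
by rewrite -map_rcons -iota_n; apply: path_ynode.
Qed.

Section AnyCycle.
Variable cyc : seq (k.-tuple Sigma).
Hypothesis cyc_cycle : is_cycle V E cyc.

Lemma mem_cyc_ynode x : x \in cyc -> exists2 i, i < n & x = ynode i.
Proof.
move=> x_cyc; case/and4P: cyc_cycle => _ _ /allP cyc_V E_cyc.
have /dbgVP[i lt_in [x_i | x_i]] := cyc_V _ x_cyc; first by exists i.
by have := next_cycle E_cyc x_cyc; rewrite x_i (negbTE (znode_sink _ lt_in)).
Qed.

Lemma mem_cyc_ynodeS i : ynode i \in cyc -> ynode i.+1 \in cyc.
Proof.
have lt_in : i %% n < n by rewrite ltn_mod n_gt0.
rewrite -(ynode_mod (modn_mod i n)) (@ynode_mod i.+1 (i %% n).+1); last first.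
  by rewrite -[i.+1]addn1 -modnDml addn1.
move=> i_cyc; have next_cyc : next cyc (ynode (i %% n)) \in cyc by rewrite mem_next.
case/and4P: cyc_cycle => _ _ _ /next_cycle/(_ i_cyc)/(dbgE_ynodeP lt_in).
case=> [<- // | next_z].
have [j _ next_j] := mem_cyc_ynode next_cyc.
by move: (ynode_neq_znode j lt_in); rewrite -next_z next_j eqxx.
Qed.

Lemma mem_cyc_ynodes j : ynode j \in cyc.
Proof.
have [x x_cyc] : exists x, x \in cyc.
  by case/and4P: cyc_cycle; case: cyc => [//|x c] *; exists x; rewrite mem_head.
have [i lt_in x_i] := mem_cyc_ynode x_cyc.
have from_i t : ynode (i + t) \in cyc.
  by elim: t => [|t IH]; rewrite ?addn0 -?x_i // addnS; apply: mem_cyc_ynodeS.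
rewrite (@ynode_mod j (i + (j %% n + n - i))); first exact: from_i.
have -> : i + (j %% n + n - i) = j %% n + n by lia.
by rewrite modnDr modn_mod.
Qed.

Lemma size_cyc : size cyc = n.
Proof.
rewrite -(size_iota 0 n) -(size_map ynode); apply/perm_size/uniq_perm.
- by case/and4P: cyc_cycle.
- by case/and4P: ycycle_is_cycle.
move=> x; apply/idP/mapP => [/mem_cyc_ynode[i lt_in ->] | [i _ ->]].
  by exists i; rewrite ?mem_iota.
exact: mem_cyc_ynodes.
Qed.

Lemma off_cycle_children i :
  i < n -> [set w in V | E (ynode i) w & w \notin cyc] = [set znode i].
Proof.
move=> lt_in; apply/setP => w; rewrite in_set1 in_set; apply/idP/eqP.
  by case/and3P=> _ /(dbgE_ynodeP lt_in)[-> | //]; rewrite mem_cyc_ynodes.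
move=> ->; rewrite znode_in // dbgE_ynode_znode //=.
apply/negP => /mem_cyc_ynode[j _ /eqP].
by rewrite eq_sym (negbTE (ynode_neq_znode j lt_in)).
Qed.

Lemma count_necklace_string (a : pred (nsym Sigma)) r :
  (forall i, count a (lab (ynode i) ++ LPar :: lab (znode i) ++ [:: RPar]) = r) ->
  count a (necklace_string V E cyc) = r * n.
Proof.
move=> count_block; rewrite /necklace_string -size_cyc.
apply: count_flatten_uniform => _ /mem_cyc_ynode[i lt_in ->].
by rewrite off_cycle_children // enum_set1 /= cats0 count_block.
Qed.

Lemma count_letter_necklace_string :
  count (@is_letter Sigma) (necklace_string V E cyc) = 2 * n.
Proof.
apply: count_necklace_string => i.
by rewrite count_cat /= count_cat !count_letter_lab //; lia.
Qed.

Lemma count_paren_necklace_string :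
  count (@is_paren Sigma) (necklace_string V E cyc) = 2 * n.
Proof.
apply: count_necklace_string => i.
by rewrite count_cat /= count_cat !count_paren_lab.
Qed.

Lemma size_necklace_string : size (necklace_string V E cyc) = 4 * n.
Proof.
rewrite -(count_predC (@is_letter Sigma)) count_letter_necklace_string.
by rewrite (eq_count (a2 := @is_paren Sigma)) // count_paren_necklace_string; lia.
Qed.

End AnyCycle.

(** * Spectrum-preserving string sets of I *)

Definition Ylist := [seq Y i | i <- iota 0 n].
Definition Zlist := [seq Z i | i <- iota 0 n].

Lemma uniq_nodes : uniq (Ylist ++ Zlist).
Proof.
rewrite cat_uniq; apply/and3P; split.
- rewrite map_inj_in_uniq ?iota_uniq // => i j; rewrite !mem_iota !add0n.
  by move=> /andP[_ lt_in] /andP[_ lt_jn] /Y_inj_mod; apply: eq_mod_lt.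
- apply/hasPn => x /mapP[j]; rewrite mem_iota add0n => /andP[_ lt_jn] ->.
  by apply/mapP => -[i _ /esym/(Y_neq_Z lt_jn)].
- rewrite map_inj_in_uniq ?iota_uniq // => i j; rewrite !mem_iota !add0n.
  by move=> /andP[_ lt_in] /andP[_ lt_jn] /Z_inj_mod; apply: eq_mod_lt.
Qed.

Lemma mem_nodes x : x \in Ylist ++ Zlist <-> node x.
Proof.
rewrite mem_cat; split=> [/orP[] /mapP[i] | [i lt_in [] ->]].
- by rewrite mem_iota add0n => /andP[_ lt_in] ->; exists i => //; left.
- by rewrite mem_iota add0n => /andP[_ lt_in] ->; exists i => //; right.
- by apply/orP; left; apply/map_f; rewrite mem_iota.
- by apply/orP; right; apply/map_f; rewrite mem_iota.
Qed.

Lemma perm_spec_nodes :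
  perm_eq [seq val w | w <- enum (spec k inputs)] (Ylist ++ Zlist).
Proof.
apply: uniq_perm; rewrite ?uniq_nodes ?(map_inj_uniq val_inj) ?enum_uniq // => x.
apply/mapP/idP => [[w] | /mem_nodes[i lt_in []] ->].
- by rewrite mem_enum => /mem_spec_inputs node_w ->; apply/mem_nodes.
- by exists (ynode i); rewrite ?mem_enum ?ynode_in.
- by exists (znode i); rewrite ?mem_enum ?znode_in.
Qed.

Lemma count_Zlist_nodes : count (mem Zlist) (Ylist ++ Zlist) = n.
Proof.
have := uniq_nodes; rewrite cat_uniq has_sym count_cat => /and3P[_ Y_Z _].
have -> : count (mem Zlist) Ylist = 0 by apply/eqP; rewrite -leqn0 leqNgt -has_count.
rewrite (@eq_in_count _ (mem Zlist) predT Zlist) => [|x x_Z]; last exact: x_Z.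
by rewrite count_predT size_map size_iota.
Qed.

Section LowerBound.
Variable R : seq (seq Sigma).
Hypothesis R_spss : spss_norep k inputs R.

Lemma node_of_all_kmers x : x \in all_kmers k R -> node x.
Proof.
have [_ _ spec_R _] := R_spss.
by case/all_kmersP=> w; rewrite spec_R => /mem_spec_inputs node_w ->.
Qed.

Lemma perm_all_kmers_nodes : perm_eq (all_kmers k R) (Ylist ++ Zlist).
Proof. exact: perm_trans (spss_norep_perm R_spss) perm_spec_nodes. Qed.

Lemma n_le_size_spss : n <= size R.
Proof.
rewrite -{1}count_Zlist_nodes -(permP perm_all_kmers_nodes) count_all_kmers.
rewrite sumnE big_map -sum1_size !big_seq; apply: leq_sum => z z_R.
apply: count_kmers_dead_end => _ w /mapP[j] + -> w_z.
rewrite mem_iota add0n => /andP[_ lt_jn]; apply: Z_dead_end lt_jn _.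
by apply: node_of_all_kmers; apply/flatten_mapP; exists z.
Qed.

Lemma weight_spss_lb : (k + 1) * n <= weight R.
Proof.
have [_ size_R _ _] := R_spss.
rewrite (weight_all_kmers (k := k)) //; last lia.
rewrite (perm_size perm_all_kmers_nodes) size_cat !size_map size_iota.
have := n_le_size_spss; nia.
Qed.

End LowerBound.

Lemma all_kmers_witness : perm_eq (all_kmers k witness) (Ylist ++ Zlist).
Proof.
rewrite /all_kmers /witness /Ylist /Zlist -map_comp.
rewrite (eq_map (g := fun i => [:: Y i; Z i])); last exact: kmers_Y_rcons.
elim: (iota 0 n) => [//|i s IH] /=.
by rewrite perm_cons perm_sym -[Z i :: _]cat1s perm_catCA /= perm_cons perm_sym.
Qed.

Lemma witness_spss : spss_norep k inputs witness.
Proof.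
apply: spss_norep_of_uniq.
- rewrite map_inj_in_uniq ?iota_uniq // => i j; rewrite !mem_iota !add0n.
  move=> /andP[_ lt_in] /andP[_ lt_jn] /(congr1 (take k)).
  by rewrite !take_size_cat ?size_Y // => /Y_inj_mod; apply: eq_mod_lt.
- by apply/allP => _ /mapP[i _ ->]; rewrite size_cat size_Y leq_addr.
- apply/setP => w; apply/idP/idP.
    by move/mem_spec_witness => node_w; apply/mem_spec_inputs.
  by move/mem_spec_inputs => node_w; apply/mem_spec_witness.
by rewrite (perm_uniq all_kmers_witness) uniq_nodes.
Qed.

Lemma weight_witness : weight witness = (k + 1) * n.
Proof.
rewrite /weight /witness -map_comp (eq_map (g := fun=> k + 1)) => [|i].
  rewrite -{2}(size_iota 0 n).
  by elim: (iota 0 n) => [|_ s /= ->]; rewrite ?muln0 ?mulnS.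
by rewrite /= size_cat size_Y.
Qed.

End DeBruijnConstruction.

Theorem mainTheorem6 (Sigma : finType) (k : nat) (S : seq Sigma) (b : nat -> Sigma) :
  2 <= #|Sigma| -> 4 <= k ->
  cyclic_deBruijn S (k - 2) ->
  (forall i, i < size S -> Some (b i) != cnth S (i + k)) ->
  let n := size S in
  let X := S ++ take k S in
  let y := fun i => cyc_sub S i k in
  let z := fun i => cyc_sub S i.+1 (k - 1) ++ [:: b i] in
  let I := X :: [seq y i ++ [:: b i] | i <- iota 0 n] in
  let V := dbgV k I in
  let E := dbgE k I in
  (* 1. nodes and edges of the de Bruijn graph *)
  [/\ uniq ([seq y i | i <- iota 0 n] ++ [seq z i | i <- iota 0 n]),
      (forall w : k.-tuple Sigma,
          w \in V <-> exists2 i, i < n & (val w = y i \/ val w = z i)),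
      (forall u v : k.-tuple Sigma,
          E u v <-> exists2 i, i < n &
             ((val u = y i /\ val v = y i.+1) \/ (val u = y i /\ val v = z i))),
  (* 2. F = E is a necklace cover with a single closed necklace *)
      [/\ necklace_cover V E E, #|necklaces V E| = 1, N_O V E = 0,
          N_L V E = n &
          (exists cyc, is_cycle V E cyc) /\
          (forall cyc, is_cycle V E cyc ->
             let s := necklace_string V E cyc in
             [/\ count (@is_letter Sigma) s = 2 * n,
                 count (@is_paren Sigma) s = 2 * n &
                 size s = 4 * n])] &
  (* 3. minimum weight of a no-repetition SPSS *)
      (forall S' : seq (seq Sigma), spss_norep k I S' -> (k + 1) * n <= weight S') /\
      (exists S' : seq (seq Sigma), spss_norep k I S' /\ weight S' = (k + 1) * n)].
Proof.
(* [2 <= #|Sigma|] is implied by the hypothesis on [b] and not used. *)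
move=> _ k_ge4 S_deBruijn b_neq n X y z I V E.
have k_ge2 : 2 <= k by lia.
split.
- exact: uniq_nodes.
- by move=> w; apply: mem_spec_inputs.
- by move=> u v; apply: dbgE_iff.
- split.
  + exact: dbg_necklace_cover.
  + by rewrite necklaces_dbg ?cards1.
  + exact: N_O_dbg.
  + exact: N_L_dbg.
  split; first by eexists; apply: ycycle_is_cycle.
  move=> cyc cyc_cycle; split.
  + exact: count_letter_necklace_string.
  + exact: count_paren_necklace_string.
  + exact: size_necklace_string.
split=> [R | ]; first exact: weight_spss_lb.
by eexists; split; [apply: witness_spss | apply: weight_witness].
Qed.
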